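(* For each positive integer $n$, \[ 1 + \sum_{k=1}^{n} (-q)^k \left( \overline{{ n \brack k }}_{q,1} + \overline{{ n-1 \brack k-1 }}_{q,1} \right) = \sum_{ |j| \le \lfloor ( n+1 )/2 \rfloor } (-1)^j q^{j^2}. \]
   Context: An overpartition is a partition in which the last occurrence of each distinct part size may be overlined; its weight $|\lambda|$ is the sum of its parts. For integers $0\le k\le n$, $\overline{{n \brack k}}_{q,1}=\sum_{\lambda} q^{|\lambda|}$, the sum over all overpartitions $\lambda$ with largest part at most $n-k$ and at most $k$ parts. *)

From HB Require Import structures.
From mathcomp Require Import all_boot all_order all_algebra.
Set Implicit Arguments. Unset Strict Implicit. Unset Printing Implicit Defensive.
Import GRing.Theory Num.Theory.

(* An overpartition is encoded as the list of its parts in nonincreasing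
   order, each part paired with a flag saying whether it is overlined.
   Only the last occurrence of a part size may be overlined: an overlined
   entry must be followed (if at all) by a strictly smaller part. *)
Definition ovp_rel (x y : nat * bool) : bool :=
  (y.1 <= x.1) && (x.2 ==> (y.1 < x.1)).

Definition is_overpartition (s : seq (nat * bool)) : bool :=
  all (fun x => 0 < x.1) s && sorted ovp_rel s.

Definition ovp_weight (s : seq (nat * bool)) : nat := sumn (map fst s).

Definition ovp_of (m l : nat) (t : l.-tuple ('I_m.+1 * bool)) : seq (nat * bool) :=
  [seq (nat_of_ord x.1, x.2) | x <- t].

(* overline{[n brack k]}_{q,1}: generating function (polynomial in q = 'X)
   of overpartitions with largest part <= n - k and at most k parts.
   Such an overpartition with l parts corresponds to exactly one l-tuple
   of (part, flag) pairs with parts in 0..n-k. *)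
Definition ovbinom (n k : nat) : {poly int} :=
  \sum_(l < k.+1)
     \sum_(t : l.-tuple ('I_(n - k).+1 * bool) | is_overpartition (ovp_of t))
        'X^(ovp_weight (ovp_of t)).

(* Let G c K be the generating function of overpartitions with at most K
   parts, each at most c, so that the bracket in the sum is G (n - k) k.
   Splitting off the largest part gives
     G (c+1) (K+1) = G c (K+1) + q^(c+1) (G (c+1) K + G c K),
   and a double induction turns this into the companion recurrence
     G (c+1) (K+1) = G (c+1) K + q^(K+1) (G c (K+1) + G c K).
   From these alone, the antidiagonal sums P n = sum_k (-q)^k G (n-k) k and
   Z n = sum_k (-1)^k G (n-k) k satisfy
     P (n+2) = P (n+1) - q^(n+2) (Z (n+1) + Z n),
     Z (n+2) + Z (n+1) = P (n+1) - q P n.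
   So the left-hand side, P n - q P (n-1) = Z (n+1) + Z n =: L n, satisfies
   L (n+3) = L (n+2) - q^(n+3) (L (n+1) - L n), and so do the partial theta
   sums on the right; both sequences start 1, 1 - 2q, 1 - 2q. *)

From mathcomp Require Import all_boot all_order all_algebra zify ring.
Set Implicit Arguments.
Unset Strict Implicit.
Unset Printing Implicit Defensive.

Import GRing.Theory Num.Theory.
Local Open Scope ring_scope.

Lemma sum_centered_absS (V : nmodType) (F : nat -> V) m :
  \sum_(i < (2 * m.+1).+1) F `|i%:Z - m.+1%:Z|%N
  = \sum_(i < (2 * m).+1) F `|i%:Z - m%:Z|%N + F m.+1 *+ 2.
Proof.
have -> : (2 * m.+1).+1 = (2 * m).+3 by lia.
rewrite big_ord_recl big_ord_recr /= subn0.
have -> : `|(bump 0 (2 * m).+1)%:Z - m.+1%:Z|%N = m.+1 by rewrite /bump; lia.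
under eq_bigr => i _ do
  have -> : `|(bump 0 i)%:Z - m.+1%:Z|%N = `|i%:Z - m%:Z|%N by rewrite /bump; lia.
by rewrite addrCA -mulr2n.
Qed.

Section ThetaPartialSums.

Variables (R : comRingType) (x : R).

Definition theta_term (k : nat) : R := (-1) ^+ k * x ^+ (k ^ 2).

Definition theta_partial (m : nat) : R :=
  \sum_(i < (2 * m).+1) theta_term `|i%:Z - m%:Z|%N.

Lemma theta_partial0 : theta_partial 0 = 1.
Proof. by rewrite /theta_partial big_ord1 /theta_term mul1r. Qed.

Lemma theta_partialS m : theta_partial m.+1 = theta_partial m + theta_term m.+1 *+ 2.
Proof. exact: sum_centered_absS. Qed.

Definition rec3 (u : nat -> R) := forall n, u n.+3 = u n.+2 - x ^+ n.+3 * (u n.+1 - u n).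

Lemma rec3_eq u v : rec3 u -> rec3 v ->
  u 0 = v 0 -> u 1 = v 1 -> u 2 = v 2 -> u =1 v.
Proof.
move=> ru rv e0 e1 e2.
suff H n : [/\ u n = v n, u n.+1 = v n.+1 & u n.+2 = v n.+2] by move=> n; case: (H n).
elim: n => [|n [en en1 en2]]; first by [].
by split=> //; rewrite ru rv en en1 en2.
Qed.

Lemma theta_partial_rec3 : rec3 (fun n => theta_partial (n.+1 %/ 2)).
Proof.
move=> n; have [j [->|->]] : exists j, n = (2 * j)%N \/ n = (2 * j).+1.
- by exists (n %/ 2)%N; lia.
- have -> : ((2 * j).+4 %/ 2 = j.+2)%N by lia.
  have -> : ((2 * j).+3 %/ 2 = j.+1)%N by lia.
  have -> : ((2 * j).+2 %/ 2 = j.+1)%N by lia.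
  have -> : ((2 * j).+1 %/ 2 = j)%N by lia.
  rewrite !theta_partialS /theta_term.
  have -> : (j.+2 ^ 2 = (2 * j).+3 + j.+1 ^ 2)%N by lia.
  rewrite exprD (exprS (-1) j.+1) !mulr2n.
  move: (x ^+ (2 * j).+3) (x ^+ (j.+1 ^ 2)) ((-1) ^+ j.+1 : R) (theta_partial j) => a b c t.
  ring.
- have -> : ((2 * j).+1.+4 %/ 2 = j.+2)%N by lia.
  have -> : ((2 * j).+4 %/ 2 = j.+2)%N by lia.
  have -> : ((2 * j).+3 %/ 2 = j.+1)%N by lia.
  have -> : ((2 * j).+2 %/ 2 = j.+1)%N by lia.
  by rewrite subrr mulr0 subr0.
Qed.

End ThetaPartialSums.

Section AlternatingAntidiagonalSums.

Variables (R : comRingType) (x : R) (G : nat -> nat -> R).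
Hypothesis G0n : forall K, G 0 K = 1.
Hypothesis Gn0 : forall c, G c 0 = 1.
Hypothesis GSS_width : forall c K, G c.+1 K.+1 = G c K.+1 + x ^+ c.+1 * (G c.+1 K + G c K).
Hypothesis GSS_height : forall c K, G c.+1 K.+1 = G c.+1 K + x ^+ K.+1 * (G c K.+1 + G c K).

Definition antidiag (w : R) (n : nat) : R := \sum_(k < n.+1) w ^+ k * G (n - k) k.

Definition antidiag_pair (n : nat) : R := antidiag (-1) n.+1 + antidiag (-1) n.

Lemma antidiagSl w n :
  antidiag w n.+1 = 1 + \sum_(k < n.+1) w ^+ k.+1 * G (n - k) k.+1.
Proof. by rewrite /antidiag big_ord_recl subn0 Gn0 mulr1. Qed.

Lemma antidiagSr w n :
  antidiag w n.+1 = \sum_(k < n.+1) w ^+ k * G (n.+1 - k) k + w ^+ n.+1.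
Proof. by rewrite /antidiag big_ord_recr /= subnn G0n mulr1. Qed.

Lemma antidiagSS_Nx n :
  antidiag (- x) n.+2 = antidiag (- x) n.+1 - x ^+ n.+2 * antidiag_pair n.
Proof.
have step c k : (- x) ^+ k.+1 * G c.+1 k.+1 = (- x) ^+ k.+1 * G c k.+1
    - x ^+ (k + c).+2 * ((-1) ^+ k * (G c.+1 k + G c k)).
  rewrite GSS_width -addnS -addSn exprD (exprNn x) exprS.
  move: (x ^+ k.+1) (x ^+ c.+1) ((-1) ^+ k : R) (G c k.+1) (G c.+1 k) (G c k) => a b s u v w.
  ring.
rewrite /antidiag_pair (antidiagSl _ n.+1) (antidiagSl _ n) big_ord_recr /=.
rewrite subnn G0n mulr1 (antidiagSr _ n).
have -> : \sum_(k < n.+1) (- x) ^+ k.+1 * G (n.+1 - k) k.+1 =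
    \sum_(k < n.+1) (- x) ^+ k.+1 * G (n - k) k.+1
    - x ^+ n.+2 * (\sum_(k < n.+1) (-1) ^+ k * G (n.+1 - k) k + antidiag (-1) n).
  rewrite /antidiag -big_split mulr_sumr -sumrB; apply: eq_bigr => k _.
  have kn : (k <= n)%N by rewrite -ltnS.
  by rewrite (subSn kn) step subnKC // mulrDr.
rewrite (exprNn x n.+2) (exprS (-1) n.+1).
move: (x ^+ n.+2) ((-1) ^+ n.+1 : R) (\sum_(k < n.+1) (- x) ^+ k.+1 * G (n - k) k.+1)
  (\sum_(k < n.+1) (-1) ^+ k * G (n.+1 - k) k) (antidiag (-1) n) => a s p u v.
ring.
Qed.

Lemma antidiag_pairS n :
  antidiag_pair n.+1 = antidiag (- x) n.+1 - x * antidiag (- x) n.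
Proof.
have step c k : (-1) ^+ k.+1 * G c.+1 k.+1 + (-1) ^+ k * G c.+1 k
    = (- x) ^+ k.+1 * G c k.+1 - x * ((- x) ^+ k * G c k).
  rewrite GSS_height !(exprNn x) exprS (exprS x).
  move: (x ^+ k) ((-1) ^+ k : R) (G c k.+1) (G c.+1 k) (G c k) => a s u v w.
  ring.
rewrite /antidiag_pair (antidiagSl _ n.+1) big_ord_recr /= subnn G0n mulr1.
rewrite (antidiagSr _ n) (antidiagSl _ n).
have -> : \sum_(k < n.+1) (-1) ^+ k.+1 * G (n.+1 - k) k.+1 =
    \sum_(k < n.+1) (- x) ^+ k.+1 * G (n - k) k.+1 - x * antidiag (- x) n
    - \sum_(k < n.+1) (-1) ^+ k * G (n.+1 - k) k.
  rewrite /antidiag mulr_sumr -!sumrB; apply: eq_bigr => k _.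
  have kn : (k <= n)%N by rewrite -ltnS.
  by rewrite (subSn kn) -step addrK.
rewrite (exprS (-1) n.+1).
move: ((-1) ^+ n.+1 : R) (\sum_(k < n.+1) (- x) ^+ k.+1 * G (n - k) k.+1)
  (\sum_(k < n.+1) (-1) ^+ k * G (n.+1 - k) k) (antidiag (- x) n) => s p u v.
ring.
Qed.

Lemma antidiag_pair_rec3 : rec3 x antidiag_pair.
Proof.
move=> n; rewrite (antidiag_pairS n.+2) (antidiag_pairS n.+1).
rewrite (antidiagSS_Nx n.+1) (antidiagSS_Nx n) (exprS x n.+2).
move: (x ^+ n.+2) (antidiag (- x) n.+1) (antidiag_pair n.+1) (antidiag_pair n) => a p u v.
ring.
Qed.

Lemma antidiag_pair0 : antidiag_pair 0 = 1.
Proof.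
by rewrite /antidiag_pair (antidiagSr _ 0) /antidiag !big_ord1 !Gn0 expr0 mulr1 expr1 subrK.
Qed.

Lemma antidiag_pair1 : antidiag_pair 1 = 1 - x *+ 2.
Proof.
rewrite antidiag_pairS (antidiagSl _ 0) /antidiag !big_ord1 G0n Gn0.
by rewrite /= !mulr1 expr1 mulr2n opprD addrA.
Qed.

Lemma antidiag_pair2 : antidiag_pair 2 = antidiag_pair 1.
Proof.
rewrite antidiag_pairS (antidiagSS_Nx 0) antidiag_pair0 antidiag_pair1.
rewrite (antidiagSl _ 0) big_ord1 G0n mulr1 expr2 mulr2n.
ring.
Qed.

Lemma antidiag_pair_theta n : antidiag_pair n = theta_partial x (n.+1 %/ 2).
Proof.
apply: (rec3_eq antidiag_pair_rec3 (theta_partial_rec3 x)) => /=.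
- by rewrite antidiag_pair0 theta_partial0.
- by rewrite antidiag_pair1 theta_partialS theta_partial0 /theta_term mulN1r mulNrn.
- by rewrite antidiag_pair2 antidiag_pair1 theta_partialS theta_partial0 /theta_term mulN1r mulNrn.
Qed.

Lemma antidiag_pair_expansion n : (0 < n)%N ->
  1 + \sum_(1 <= k < n.+1) (- x) ^+ k * (G (n - k) k + G (n.-1 - k.-1) k.-1)
  = antidiag_pair n.
Proof.
case: n => // n _; rewrite antidiag_pairS antidiagSl big_add1 /= big_mkord.
rewrite /antidiag -addrA mulr_sumr -sumrB; congr (_ + _); apply: eq_bigr => k _.
by rewrite subSS mulrDr; congr (_ + _); rewrite exprS !mulNr mulrA.
Qed.

End AlternatingAntidiagonalSums.

Lemma big_tuple_cons (T : finType) (V : nmodType) l (P : pred (l.+1.-tuple T))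
    (F : l.+1.-tuple T -> V) :
  \sum_(t | P t) F t =
  \sum_(y : T) \sum_(t : l.-tuple T | P (cons_tuple y t)) F (cons_tuple y t).
Proof.
rewrite pair_big_dep /= (reindex (fun p : T * l.-tuple T => cons_tuple p.1 p.2)) /=.
  by apply: eq_bigl => p.
exists (fun t => (thead t, behead_tuple t)) => [[y t] _|t _] /=.
  by congr pair; apply: val_inj.
by apply: val_inj; rewrite /= [in RHS](tuple_eta t).
Qed.

Lemma big_ord_pos_le (V : nmodType) (M c : nat) (F : nat -> V) : (c <= M)%N ->
  \sum_(a < M.+1 | (0 < a <= c)%N) F a = \sum_(a < c) F a.+1.
Proof.
move=> cM; rewrite big_mkcond big_ord_recl /= add0r.
by rewrite (big_ord_widen M (fun a => F a.+1) cM) [RHS]big_mkcond.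
Qed.

Lemma ovp_rel_trans : transitive ovp_rel.
Proof. by move=> [y []] [x []] [z []]; rewrite /ovp_rel /=; lia. Qed.

Lemma overpartition_cons_le (c a : nat) (b : bool) s :
  is_overpartition ((a, b) :: s) && all (fun y => y.1 <= c)%N ((a, b) :: s) =
  (0 < a <= c)%N && (is_overpartition s && all (fun y => y.1 <= a - b)%N s).
Proof.
rewrite /is_overpartition /= path_sortedE; last exact: ovp_rel_trans.
case: a => [|a] //=.
have -> : all (ovp_rel (a.+1, b)) s = all (fun y => y.1 <= a.+1 - b)%N s.
  by apply: eq_all => -[z zb]; rewrite /ovp_rel /=; case: b => /=; apply/idP/idP; lia.
case: (boolP (a < c)%N) => ac /=; last by rewrite !andbF.
case sb: (all (fun y => y.1 <= a.+1 - b)%N s); rewrite /= ?andbF //.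
have -> : all (fun y => y.1 <= c)%N s by apply: sub_all sb => z /=; lia.
by rewrite !andbT andbC.
Qed.

(* The largest part is a.+1 <= c; the other parts are at most a.+1, or at
   most a when the largest part is overlined. *)
Fixpoint ovgf (l c : nat) : {poly int} :=
  if l is l'.+1 then \sum_(a < c) 'X^(a.+1) * (ovgf l' a.+1 + ovgf l' a) else 1.

Definition bounded_ovp_gf (M l c : nat) : {poly int} :=
  \sum_(t : l.-tuple ('I_M.+1 * bool) |
      is_overpartition (ovp_of t) && all (fun y => y.1 <= c)%N (ovp_of t))
    'X^(ovp_weight (ovp_of t)).

Lemma bounded_ovp_gfE M l c : (c <= M)%N -> bounded_ovp_gf M l c = ovgf l c.
Proof.
elim: l c => [|l IH] c cM.
  by rewrite /bounded_ovp_gf (big_pred1 [tuple]) // => t; rewrite tuple0 /= eqxx.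
rewrite /bounded_ovp_gf big_tuple_cons /=.
transitivity (\sum_(y : 'I_M.+1 * bool)
    if (0 < y.1 <= c)%N then 'X^(y.1) * bounded_ovp_gf M l (y.1 - y.2) else 0).
  apply: eq_bigr => -[a b] _ /=.
  under eq_bigl => t do rewrite [ovp_of _]/= overpartition_cons_le.
  case: ifP => _; last by rewrite big_pred0.
  by rewrite /bounded_ovp_gf mulr_sumr; apply: eq_bigr => t _; rewrite /ovp_weight /= exprD.
rewrite -(pair_bigA _ (fun (a : 'I_M.+1) (b : bool) =>
  if (0 < a <= c)%N then 'X^a * bounded_ovp_gf M l (a - b) else 0)) /=.
rewrite -(big_ord_pos_le (fun a => 'X^a * (ovgf l a + ovgf l a.-1)) cM).
rewrite [RHS]big_mkcond; apply: eq_bigr => a _; rewrite big_bool /=.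
case: ifP => [/andP[a0 ac]|_]; last by rewrite addr0.
by rewrite !IH ?subn1 ?subn0 1?mulrDr 1?addrC //; lia.
Qed.

Definition ovbox (c K : nat) : {poly int} := \sum_(l < K.+1) ovgf l c.

Lemma ovbinomE n k : ovbinom n k = ovbox (n - k) k.
Proof.
rewrite /ovbinom /ovbox; apply: eq_bigr => l _.
rewrite -(bounded_ovp_gfE l (leqnn (n - k))); apply: eq_bigl => t.
rewrite [X in _ && X](_ : _ = true) ?andbT //.
by apply/allP => -[y b] /mapP [[z zb] _ [-> _]] /=; rewrite -ltnS ltn_ord.
Qed.

Lemma ovgfS0 l : ovgf l.+1 0 = 0.
Proof. by rewrite /= big_ord0. Qed.

Lemma ovgfSS l c : ovgf l.+1 c.+1 = ovgf l.+1 c + 'X^(c.+1) * (ovgf l c.+1 + ovgf l c).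
Proof. by rewrite /= big_ord_recr. Qed.

Arguments ovgf : simpl never.

Lemma ovbox0n K : ovbox 0 K = 1.
Proof. by rewrite /ovbox big_ord_recl big1 ?addr0 // => i _; rewrite ovgfS0. Qed.

Lemma ovboxn0 c : ovbox c 0 = 1.
Proof. by rewrite /ovbox big_ord1. Qed.

Lemma ovboxS c K : ovbox c K.+1 = 1 + \sum_(l < K.+1) ovgf l.+1 c.
Proof. by rewrite /ovbox big_ord_recl. Qed.

Lemma ovboxSS_width c K :
  ovbox c.+1 K.+1 = ovbox c K.+1 + 'X^(c.+1) * (ovbox c.+1 K + ovbox c K).
Proof.
rewrite !ovboxS -addrA; congr (_ + _).
under eq_bigr => l _ do rewrite ovgfSS.
by rewrite big_split /= -!mulr_sumr big_split.
Qed.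

Lemma ovgfSS_shift l c : ovgf l.+1 c.+1 = 'X^(l.+1) * (ovbox c l.+1 + ovbox c l).
Proof.
elim: l c => [|l IHl]; elim=> [|c IHc].
- by rewrite ovgfSS ovgfS0 !ovbox0n add0r.
- rewrite ovgfSS IHc (ovboxSS_width c 0) !ovboxn0 (exprS _ c.+1).
  by move: ('X^(c.+1)) (ovbox c 1) => a b; ring.
- by rewrite ovgfSS ovgfS0 IHl !ovbox0n add0r ovgfS0 addr0 (exprS _ l.+1) mulrA.
- rewrite ovgfSS IHc !IHl (ovboxSS_width c l.+1) (ovboxSS_width c l) !exprS.
  move: ('X^c) ('X^l) (ovbox c l.+2) (ovbox c l.+1) (ovbox c l) (ovbox c.+1 l)
    (ovbox c.+1 l.+1) => a b u v w y z.
  ring.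
Qed.

Lemma ovboxSS_height c K :
  ovbox c.+1 K.+1 = ovbox c.+1 K + 'X^(K.+1) * (ovbox c K.+1 + ovbox c K).
Proof. by rewrite /ovbox big_ord_recr /= ovgfSS_shift. Qed.

Theorem corollary1p4 (n : nat) : (0 < n)%N ->
  1 + \sum_(1 <= k < n.+1) (- 'X) ^+ k * (ovbinom n k + ovbinom n.-1 k.-1)
  = \sum_(i < (2 * (n.+1 %/ 2)).+1)
      (let j : int := (i%:Z - (n.+1 %/ 2)%:Z)%R in
       (-1) ^+ `|j|%N * 'X^(`|j|%N ^ 2)) :> {poly int}.
Proof.
move=> n_gt0; under eq_bigr do rewrite !ovbinomE.
rewrite (antidiag_pair_expansion ovbox0n ovboxn0 ovboxSS_height n_gt0).
by rewrite (antidiag_pair_theta ovbox0n ovboxn0 ovboxSS_width ovboxSS_height).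
Qed.
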